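(* Assume the model (M.2) with $M_0>0$ and the sub-Gaussian condition (A.4) described in the context, and let Algorithm 2 be applied to $X_1,\ldots,X_N$. (i) For $k\in\{1,\ldots,M_0\}$ let $q_k(N)=250D\log N/(c_0|\mu_k-\mu_{k+1}|^2)$, and let $F_{k,N}$ be the event that there exist integers $1\le n_1<n_2<N_k$ and $1\le n_3\le N_{k+1}$ such that $\{X^{(k)}_n:n=n_1+1,\ldots,n_2\}$ and $\{X^{(k)}_n:n=n_2+1,\ldots,N_k\}\cup\{X^{(k+1)}_n:n=1,\ldots,n_3\}$ are two detected segments and $\min\{N_k-n_2,n_3\}>q_k(N)$. Then $\Pr(\limsup_{N\to\infty}F_{k,N})=0$. (ii) For $k\in\{2,\ldots,M_0+1\}$ let $\tilde q_k(N)=250D\log N/(c_0|\mu_{k-1}-\mu_k|^2)$, and let $\tilde F_{k,N}$ be the event that there exist integers $1\le n_1<n_2<N_k$ and $1\le n_3\le N_{k-1}$ such that $\{X^{(k-1)}_n:n=N_{k-1}-n_3+1,\ldots,N_{k-1}\}\cup\{X^{(k)}_n:n=1,\ldots,n_1\}$ and $\{X^{(k)}_n:n=n_1+1,\ldots,n_2\}$ are two detected segments and $\min\{n_1,n_3\}>\tilde q_k(N)$. Then $\Pr(\limsup_{N\to\infty}\tilde F_{k,N})=0$.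
   Context: Model (M.2): for each sample size $N$ one observes independent random vectors $X_1,\ldots,X_N\in\mathbb{R}^D$ ($D\in\mathbb{N}$ fixed). There are $M_0\ge 0$ (fixed) change points $0=L_0<L_1<\cdots<L_{M_0}<L_{M_0+1}=N$ (depending on $N$), with segment sizes $N_k=L_k-L_{k-1}$, $N_k\to\infty$; for each $k$, $X_{L_{k-1}+1},\ldots,X_{L_k}$ are i.i.d. with distribution $\mathcal{G}_k$ with mean $\mu_k$ and finite covariance; $\mu_k\neq\mu_{k+1}$. Write $X^{(k)}_n=X_{L_{k-1}+n}$, $n=1,\ldots,N_k$. (A.4): there is $c_0>0$ such that for every $k$, coordinate $d$, $n\ge1$ and $a>0$, the mean $\bar Z$ of $n$ i.i.d. copies of the $d$-th marginal of $\mathcal{G}_k$ satisfies $\Pr(|\bar Z-E\bar Z|\ge a)\le2e^{-c_0a^2n}$. Quadratic loss: $\mathrm{Loss}_q(x_a,\ldots,x_b)=\sum_{n=a}^b|x_n-\bar x|^2$, $\bar x$ the sample mean, $|\cdot|$ Euclidean norm. Algorithm 2 (inputs $M_{\max}\ge1$, penalty $f(N)>0$, minimal segment size $\beta(N)$): for $k=0,1,\ldots,M_{\max}$ compute $\hat e_k=\min\sum_{j=1}^{k+1}\mathrm{Loss}_q(x_{\ell_{j-1}+1},\ldots,x_{\ell_j})$ over $0=\ell_0<\ell_1<\cdots<\ell_{k+1}=N$ with a minimizer; if its smallest segment has size $<\beta(N)$, set $M=k-1$ and stop (else $M=M_{\max}$). Output $\hat M=\arg\min_{0\le k\le M}(\hat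 e_k+kf(N))$ and the change points $\hat\ell_1<\cdots<\hat\ell_{\hat M}$ of the minimizer for $k=\hat M$. The detected segments are the blocks $\{X_n:n=\hat\ell_{j-1}+1,\ldots,\hat\ell_j\}$, $j=1,\ldots,\hat M+1$ ($\hat\ell_0=0,\hat\ell_{\hat M+1}=N$); ''two detected segments'' means two neighboring ones, in the order listed. $\limsup_N E_N$ is the event that $E_N$ occurs for infinitely many $N$. *)

From HB Require Import structures.
From mathcomp Require Import all_boot all_order all_algebra.
From mathcomp Require Import all_classical all_reals all_analysis.
Set Implicit Arguments. Unset Strict Implicit. Unset Printing Implicit Defensive.
Import Order.TTheory GRing.Theory Num.Theory.
Local Open Scope classical_set_scope.
Local Open Scope ring_scope.

Definition vec_event {T R : Type} (m : nat) (Z : 'I_m -> T -> R)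
    (A : 'I_m -> set R) : set T :=
  \big[setI/setT]_(i < m) (Z i @^-1` A i).

(* mutual independence of the random vectors (Z n)_{n in S}
   (product rule over every finite subfamily, for all Borel rectangles,
   which generate the product sigma-algebra of R^m) *)
Definition indep_vectors {d} {T : measurableType d} {R : realType}
    (P : probability T R) (m : nat) (S : seq nat) (Z : nat -> 'I_m -> T -> R) :
    Prop :=
  forall (J : seq nat), uniq J -> {subset J <= S} ->
  forall A : nat -> 'I_m -> set R, (forall n i, measurable (A n i)) ->
  P (\big[setI/setT]_(n <- J) vec_event (Z n) (A n))
  = (\prod_(n <- J) P (vec_event (Z n) (A n)))%E.

Definition indep_reals {d} {T : measurableType d} {R : realType}
    (P : probability T R) (S : seq nat) (Y : nat -> T -> R) : Prop :=
  indep_vectors P S (fun n (_ : 'I_1) => Y n).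

Definition infinitely_often {T : Type} (E : nat -> set T) : set T :=
  [set w | forall N0 : nat, exists2 N : nat, (N0 <= N)%N & E N w].

(* data: x : nat -> 'I_D -> R, the observations are x 1, ..., x N           *)

Section Algorithm.
Variables (R : realType) (D : nat).
Implicit Types (x : nat -> 'I_D -> R).

Definition block_mean x (a b : nat) (d : 'I_D) : R :=
  (\sum_(a.+1 <= n < b.+1) x n d) / (b - a)%:R.

Definition loss_q x (a b : nat) : R :=
  \sum_(a.+1 <= n < b.+1) \sum_(d < D) (x n d - block_mean x a b d) ^+ 2.

Definition bounds (N : nat) (ls : seq nat) : seq nat := 0%N :: rcons ls N.

Definition is_seg (N k : nat) (ls : seq nat) : Prop :=
  size ls = k /\ sorted ltn (bounds N ls).

Definition seg_cost x (N : nat) (ls : seq nat) : R :=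
  \sum_(j < (size ls).+1)
     loss_q x (nth 0%N (bounds N ls) j) (nth 0%N (bounds N ls) j.+1).

Definition is_minimizer x (N k : nat) (ls : seq nat) : Prop :=
  is_seg N k ls /\ forall ls', is_seg N k ls' -> seg_cost x N ls <= seg_cost x N ls'.

Definition small_seg (N : nat) (beta : R) (ls : seq nat) : bool :=
  has (fun j => ((nth 0%N (bounds N ls) j.+1 - nth 0%N (bounds N ls) j)%:R < beta))
      (iota 0 (size ls).+1).

(* (Mhat, ls) is an output of Algorithm 2 on x_1..x_N with inputs Mmax,
   penalty fN = f(N) and minimal segment size betaN = beta(N), for SOME
   choice of the minimizers computed by the algorithm (sol k is the
   minimizer chosen for k change points; M is the value of M at stop). *)
Definition alg2_output x (N Mmax : nat) (fN betaN : R) (Mhat : nat)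
    (ls : seq nat) : Prop :=
  exists (sol : nat -> seq nat) (M : nat),
    [/\ (M = Mmax /\ forall k, (k <= Mmax)%N ->
            is_minimizer x N k (sol k) /\ ~~ small_seg N betaN (sol k))
        \/ [/\ (M < Mmax)%N,
               forall k, (k <= M.+1)%N -> is_minimizer x N k (sol k),
               forall k, (k <= M)%N -> ~~ small_seg N betaN (sol k) &
               small_seg N betaN (sol M.+1)],
        (Mhat <= M)%N,
        forall k, (k <= M)%N ->
          seg_cost x N (sol Mhat) + Mhat%:R * fN <= seg_cost x N (sol k) + k%:R * fN
      & ls = sol Mhat].

(* the detected segments are the blocks (b_j, b_(j+1)], b = bounds N ls;
   "two detected segments" (b_j, b_(j+1)] and (b_(j+1), b_(j+2)] *)
Definition two_detected (N : nat) (ls : seq nat) (a b c : nat) : Prop :=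
  exists j : nat, [/\ (j.+2 <= (size ls).+1)%N,
    nth 0%N (bounds N ls) j = a,
    nth 0%N (bounds N ls) j.+1 = b &
    nth 0%N (bounds N ls) j.+2 = c].

End Algorithm.

Definition sqdist {R : realType} {D : nat} (u v : 'I_D -> R) : R :=
  \sum_(d < D) (u d - v d) ^+ 2.

(* Splitting a block (a, c] at b lowers the quadratic loss by the gain
   (b - a)(c - b)/(c - a) * |xbar_(a,b] - xbar_(b,c]|^2.  If a minimizing
   segmentation had consecutive boundaries a < b < c with b strictly inside
   segment k, at distance more than q_k(N) before the change point l = L_k,
   and c beyond l, then moving b to l would change the cost by
   gain(a, b, l) - gain(b, l, c), which minimality forces to be nonnegative.
   But as long as every block mean inside a segment stays within
   sqrt(4 log N / (c0 n)) of its mean in each coordinate, gain(a, b, l) is at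
   most 8 D log N / c0 while gain(b, l, c) exceeds it, both pieces being
   longer than q_k(N).  By (A.4) and a union bound over the O(N^2) blocks the
   exceptional event has probability O(N^-2), so by Borel-Cantelli it occurs
   only finitely often.  Part (ii) is the mirror image. *)

From HB Require Import structures.
From mathcomp Require Import all_boot all_order all_algebra.
From mathcomp Require Import all_classical all_reals all_analysis.
From mathcomp Require Import ring lra zify.
Import Order.TTheory GRing.Theory Num.Theory.
Local Open Scope classical_set_scope.
Local Open Scope ring_scope.

Section SquaredDistance.
Context {R : realType} {D : nat}.
Implicit Types u v w p q : 'I_D -> R.

Lemma sqdist_ge0 u v : 0 <= sqdist u v.
Proof. by apply: sumr_ge0 => i _; apply: sqr_ge0. Qed.

Lemma sqdist_gt0 {u v} : u <> v -> 0 < sqdist u v.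
Proof.
move=> neq_uv; rewrite lt_def sqdist_ge0 andbT.
apply: contra_notN neq_uv => /eqP/psumr_eq0P uv0; apply/funext => i.
by apply/eqP; rewrite -subr_eq0 -sqrf_eq0 uv0 // => j _; apply: sqr_ge0.
Qed.

Lemma sqdist_le_const u v (c : R) :
  (forall i, (u i - v i) ^+ 2 <= c) -> sqdist u v <= D%:R * c.
Proof.
move=> le_c; apply: (le_trans (ler_sum _ (fun i _ => le_c i))).
by rewrite sumr_const card_ord mulr_natl.
Qed.

Lemma sqdist_ge_sub p q u v :
  sqdist u v / 2 - 2 * (sqdist p u + sqdist q v) <= sqdist p q.
Proof.
rewrite /sqdist mulr_suml -!big_split /= mulr_sumr -sumrB.
apply: ler_sum => i _.
have := sqr_ge0 (u i - v i + 2 * (p i - u i - (q i - v i))).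
have := sqr_ge0 (p i - u i + (q i - v i)).
nra.
Qed.

Lemma sqdist_le_via p q w : sqdist p q <= 2 * (sqdist p w + sqdist q w).
Proof.
rewrite /sqdist -big_split /= mulr_sumr; apply: ler_sum => i _.
have := sqr_ge0 (p i - w i + (q i - w i)).
nra.
Qed.

End SquaredDistance.

Section HarmonicWeight.
Context {R : realType}.

Lemma harmonic_weight_le (r s S c : R) : 0 < r -> 0 < s ->
  S <= c / r + c / s -> r * s / (r + s) * S <= c.
Proof.
move=> r0 s0 le_S.
have -> : c = r * s / (r + s) * (c / r + c / s) by field; lra.
by apply: ler_wpM2l => //; apply: divr_ge0; nra.
Qed.

Lemma harmonic_weight_gt (u v q : R) : 0 <= q -> q < u -> q < v ->
  q / 2 < u * v / (u + v).
Proof. by move=> q0 qu qv; rewrite ltr_pdivlMr; nra. Qed.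

Lemma separated_weight_gt (G Δ u v S : R) : 0 <= G -> 0 < Δ ->
  250 * G / Δ < u -> 250 * G / Δ < v ->
  Δ / 2 - 2 * (4 * G / u + 4 * G / v) <= S -> 8 * G < u * v / (u + v) * S.
Proof.
move=> G0 Δ0 qu qv le_S.
have q0 : 0 <= 250 * G / Δ := divr_ge0 (mulr_ge0 (ler0n _ _) G0) (ltW Δ0).
have [q def_q] : exists q, q = 250 * G / Δ by eexists.
rewrite -def_q in q0 qu qv.
have small t : q < t -> 4 * G / t <= 4 * Δ / 250.
  move=> qt; have t0 : 0 < t := le_lt_trans q0 qt.
  move: qt; rewrite def_q ltr_pdivrMr // ler_pdivrMr //.
  have -> : 4 * Δ / 250 * t = 4 / 250 * (t * Δ) by ring.
  lra.
have S_gt : 16 * Δ / 250 < S by have := small u qu; have := small v qv; lra.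
have -> : 8 * G = q / 2 * (16 * Δ / 250) by rewrite def_q; field; exact: lt0r_neq0.
apply: ltr_pM (@harmonic_weight_gt u v q q0 qu qv) S_gt.
  exact: divr_ge0 q0 (ler0n _ _).
exact: divr_ge0 (mulr_ge0 (ler0n _ _) (ltW Δ0)) (ler0n _ _).
Qed.

End HarmonicWeight.

Section Segmentation.
Context {R : realType} {D : nat}.
Implicit Types x : nat -> 'I_D -> R.

Definition block_sum x a b d := \sum_(a.+1 <= n < b.+1) x n d.
Definition block_sqsum x a b d := \sum_(a.+1 <= n < b.+1) x n d ^+ 2.

Lemma block_sum_cat x d {a b c} : (a <= b <= c)%N ->
  block_sum x a c d = block_sum x a b d + block_sum x b c d.
Proof. by case/andP=> ab bc; rewrite /block_sum (big_cat_nat _ (n := b.+1)). Qed.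

Lemma block_sqsum_cat x d {a b c} : (a <= b <= c)%N ->
  block_sqsum x a c d = block_sqsum x a b d + block_sqsum x b c d.
Proof. by case/andP=> ab bc; rewrite /block_sqsum (big_cat_nat _ (n := b.+1)). Qed.

Lemma block_meanE x a b d :
  block_mean x a b d = (\sum_(1 <= j < (b - a).+1) x (a + j)%N d) / (b - a)%:R.
Proof.
case: (leqP b a) => [ba|ab].
  rewrite /block_mean (_ : (b - a)%N = 0%N) ?big_geq //; lia.
rewrite /block_mean -(add1n a) big_addn -subSn; last exact: ltnW.
by congr (_ / _); apply: eq_bigr => j _; rewrite addnC.
Qed.

Lemma loss_qE x a b : (a < b)%N ->
  loss_q x a b = \sum_(d < D) (block_sqsum x a b d - block_sum x a b d ^+ 2 / (b - a)%:R).
Proof.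
move=> ab; rewrite /loss_q exchange_big /=; apply: eq_bigr => d _.
rewrite /block_mean -/(block_sum x a b d).
set m := block_sum x a b d / (b - a)%:R.
have -> : \sum_(a.+1 <= n < b.+1) (x n d - m) ^+ 2 =
    \sum_(a.+1 <= n < b.+1) (x n d ^+ 2 - 2 * m * x n d + m ^+ 2).
  by apply: eq_bigr => n _; ring.
rewrite big_split sumrB /= -mulr_sumr -/(block_sqsum x a b d) -/(block_sum x a b d).
rewrite sumr_const_nat subSS -[_ *+ (b - a)]mulr_natr /m.
have : (b - a)%:R != 0 :> R by rewrite pnatr_eq0 subn_eq0 -ltnNge.
by move: (b - a)%:R => n n0; field.
Qed.

Definition split_gain x a b c : R :=
  (b - a)%:R * (c - b)%:R / ((b - a)%:R + (c - b)%:R) *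
  sqdist (block_mean x a b) (block_mean x b c).

Lemma loss_q_split x {a b c} : (a < b)%N -> (b < c)%N ->
  loss_q x a c = loss_q x a b + loss_q x b c + split_gain x a b c.
Proof.
move=> ab bc; have abc : (a <= b <= c)%N by rewrite (ltnW ab) (ltnW bc).
have ac := ltn_trans ab bc.
rewrite !loss_qE // /split_gain /sqdist mulr_sumr -!big_split /=.
apply: eq_bigr => d _; rewrite (block_sum_cat x d abc) (block_sqsum_cat x d abc).
rewrite /block_mean -/(block_sum x a b d) -/(block_sum x b c d).
have -> : (c - a)%N = ((b - a) + (c - b))%N by lia.
rewrite natrD.
have : (b - a)%:R != 0 :> R by rewrite pnatr_eq0 subn_eq0 -ltnNge.
have : (c - b)%:R != 0 :> R by rewrite pnatr_eq0 subn_eq0 -ltnNge.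
have : (b - a)%:R + (c - b)%:R != 0 :> R.
  by rewrite -natrD pnatr_eq0 addn_eq0 negb_and subn_eq0 -ltnNge ab.
move: (b - a)%:R (c - b)%:R => n1 n2 n12 n2' n1'.
by field; rewrite n1' n2' n12.
Qed.

Implicit Types (ls : seq nat).

Lemma size_bounds N ls : size (bounds N ls) = (size ls).+2.
Proof. by rewrite /= size_rcons. Qed.

Lemma nth_bounds_set_nth N ls j b i : (j < size ls)%N ->
  nth 0%N (bounds N (set_nth 0%N ls j b)) i =
  if i == j.+1 then b else nth 0%N (bounds N ls) i.
Proof.
move=> js; case: i => [|i] //=.
rewrite !nth_rcons size_set_nth (maxn_idPr js) nth_set_nth /= eqSS.
by case: (i =P j) => [->|_] //; rewrite js.
Qed.

Lemma two_detected_lt {N k ls a b c} :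
  is_seg N k ls -> two_detected N ls a b c -> (a < b < c)%N.
Proof.
move=> [_ /(sortedP 0%N) sorted_ls] [j [jls <- <- <-]].
rewrite size_bounds in sorted_ls.
by apply/andP; split; apply: sorted_ls => //; apply: ltnW.
Qed.

Lemma big_ord_D2 (F : nat -> R) n j : (j.+2 <= n)%N ->
  \sum_(i < n) F i =
  F j + F j.+1 + \sum_(i < n | (i != j :> nat) && (i != j.+1 :> nat)) F i.
Proof.
move=> jn; have j_lt : (j < n)%N by apply: ltnW.
rewrite (bigD1 (Ordinal j_lt)) // (bigD1 (Ordinal jn)) /=; last by rewrite -val_eqE /=; lia.
by rewrite addrA; congr (_ + _); apply: eq_bigl => i; rewrite andbT -!val_eqE.
Qed.

Section MoveBoundary.
Context {x : nat -> 'I_D -> R} {N k : nat} {ls : seq nat} {j b : nat}.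
Hypothesis j_lt : (j.+2 <= (size ls).+1)%N.
Let bs := bounds N ls.
Hypothesis b_in : (nth 0%N bs j < b < nth 0%N bs j.+2)%N.
Let ls' := set_nth 0%N ls j b.

Let js : (j < size ls)%N. Proof. by []. Qed.
Let size_ls' : size ls' = size ls.
Proof. by rewrite size_set_nth; apply/maxn_idPr. Qed.

Lemma is_seg_set_nth : is_seg N k ls -> is_seg N k ls'.
Proof.
move=> [sz_ls /(sortedP 0%N) sorted_ls]; have /andP[lt_jb lt_bj2] := b_in.
split; first by rewrite size_ls'.
apply/(sortedP 0%N) => i; rewrite size_bounds size_ls' => i_lt.
rewrite !nth_bounds_set_nth //; move: (sorted_ls i); rewrite size_bounds => /(_ i_lt).
case: (i =P j.+1) => [-> _|_]; first by rewrite eqSS gtn_eqF.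
by case: (i.+1 =P j.+1) => [[->] _|].
Qed.

Lemma seg_cost_set_nth :
  seg_cost x N ls' - (loss_q x (nth 0%N bs j) b + loss_q x b (nth 0%N bs j.+2)) =
  seg_cost x N ls -
    (loss_q x (nth 0%N bs j) (nth 0%N bs j.+1) +
     loss_q x (nth 0%N bs j.+1) (nth 0%N bs j.+2)).
Proof.
pose cost s i := loss_q x (nth 0%N (bounds N s) i) (nth 0%N (bounds N s) i.+1).
rewrite /seg_cost size_ls' (big_ord_D2 (cost ls') _ _ j_lt).
rewrite (big_ord_D2 (cost ls) _ _ j_lt) /cost.
rewrite /ls' /bs !nth_bounds_set_nth // (ltn_eqF (ltnSn j)) eqxx eqSS (gtn_eqF (ltnSn j)).
under eq_bigr => i /andP[ij ij1] do
  rewrite !nth_bounds_set_nth // (negbTE ij1) eqSS (negbTE ij).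
lra.
Qed.

Lemma minimizer_set_nth : is_minimizer x N k ls ->
  loss_q x (nth 0%N bs j) (nth 0%N bs j.+1) + loss_q x (nth 0%N bs j.+1) (nth 0%N bs j.+2)
  <= loss_q x (nth 0%N bs j) b + loss_q x b (nth 0%N bs j.+2).
Proof.
move=> [seg_ls min_ls]; have := min_ls _ (is_seg_set_nth seg_ls).
have := seg_cost_set_nth; lra.
Qed.

End MoveBoundary.

Lemma minimizer_move_boundary {x N k ls a b c b'} :
  is_minimizer x N k ls -> two_detected N ls a b c -> (a < b' < c)%N ->
  loss_q x a b + loss_q x b c <= loss_q x a b' + loss_q x b' c.
Proof.
by move=> min_ls [j [j_lt <- <- <-]] b'_in; exact: minimizer_set_nth j_lt b'_in min_ls.
Qed.

Lemma split_gain_right {x N k ls a b c b'} :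
  is_minimizer x N k ls -> two_detected N ls a b c -> (b < b' < c)%N ->
  split_gain x b b' c <= split_gain x a b b'.
Proof.
move=> min_ls det /andP[bb' b'c].
have /andP[ab bc] := two_detected_lt min_ls.1 det.
have ab'c : (a < b' < c)%N by rewrite (ltn_trans ab bb') b'c.
have := minimizer_move_boundary min_ls det ab'c.
by rewrite (loss_q_split x ab bb') (loss_q_split x bb' b'c); lra.
Qed.

Lemma split_gain_left {x N k ls a b c b'} :
  is_minimizer x N k ls -> two_detected N ls a b c -> (a < b' < b)%N ->
  split_gain x a b' b <= split_gain x b' b c.
Proof.
move=> min_ls det /andP[ab' b'b].
have /andP[ab bc] := two_detected_lt min_ls.1 det.
have ab'c : (a < b' < c)%N by rewrite ab' (ltn_trans b'b bc).
have := minimizer_move_boundary min_ls det ab'c.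
by rewrite (loss_q_split x ab' b'b) (loss_q_split x b'b bc); lra.
Qed.

Lemma alg2_output_minimizer x N Mmax fN betaN Mhat ls :
  alg2_output x N Mmax fN betaN Mhat ls -> is_minimizer x N Mhat ls.
Proof.
move=> [sol [M [[[-> sol_ok]|[_ sol_min _ _]] le_Mhat _ ->]]].
  exact: (sol_ok _ le_Mhat).1.
exact/sol_min/(leq_trans le_Mhat).
Qed.

End Segmentation.

Lemma infinitely_often_sub {T : Type} {F G : nat -> set T} {N0 : nat} :
  (forall N, (N0 <= N)%N -> F N `<=` G N) ->
  infinitely_often F `<=` infinitely_often G.
Proof.
move=> FG w Fw M; have [N le_N FNw] := Fw (maxn M N0).
exists N; first exact: leq_trans (leq_maxl _ _) le_N.
exact: FG (leq_trans (leq_maxr _ _) le_N) _ _.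
Qed.

Section BorelCantelli.
Context {d : measure_display} {T : measurableType d} {R : realType}.
Variable P : probability T R.
Local Open Scope ereal_scope.

Lemma le_measure_bigsetU {I : Type} (r : seq I) (F : I -> set T) :
  (forall i, measurable (F i)) ->
  P (\big[setU/set0]_(i <- r) F i) <= \sum_(i <- r) P (F i).
Proof.
move=> mF; elim: r => [|i r IH]; first by rewrite !big_nil measure0.
rewrite !big_cons.
have mU : measurable (\big[setU/set0]_(j <- r) F j) by apply: bigsetU_measurable.
exact: le_trans (measureU2 P (mF i) mU) (leeD2l _ IH).
Qed.

Lemma le_measure_bigsetU_card (I : finType) (F : I -> set T) (c : R) :
  (forall i, measurable (F i)) -> (forall i, P (F i) <= c%:E) ->
  P (\big[setU/set0]_(i : I) F i) <= (#|I|%:R * c)%:E.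
Proof.
move=> mF le_c; apply: (le_trans (le_measure_bigsetU _ _ mF)).
have -> : (#|I|%:R * c)%:E = \sum_(i : I) c%:E.
  by rewrite sumEFin sumr_const mulr_natl.
by apply: lee_sum => i _.
Qed.

Lemma borel_cantelli (B : nat -> set T) :
  (forall N, measurable (B N)) -> \sum_(0 <= N <oo) P (B N) < +oo ->
  P.-negligible (infinitely_often B).
Proof.
move=> mB sumB; exists (lim_sup_set B); split.
- by apply: bigcapT_measurable => n; apply: bigcup_measurable => N _.
- exact: lim_sup_set_cvg0.
- by move=> w Bw n _; have [N] := Bw n; exists N.
Qed.

Lemma telescoping_series_lty (u : nat -> \bar R) (h : nat -> R) (C : R) :
  (0 <= C)%R -> (forall n, 0 <= u n) -> (forall n, 0 <= h n)%R ->
  (forall n, u n <= (C * (h n - h n.+1))%:E) -> \sum_(0 <= n <oo) u n < +oo.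
Proof.
move=> C0 u0 h0 le_u; apply: (@le_lt_trans _ _ (C * h 0%N)%:E); last exact: ltry.
apply: lime_le; first exact: is_cvg_ereal_nneg_natsum.
apply: nearW => m.
apply: (@le_trans _ _ (\sum_(0 <= n < m) (C * (h n - h n.+1))%:E)).
  by apply: lee_sum => n _.
rewrite sumEFin lee_fin -mulr_sumr ler_wpM2l //.
rewrite (@telescope_sumr_eq _ _ _ (fun n => (- h n)%R)) // => [|k _].
  by have := h0 m; lra.
by rewrite opprK addrC.
Qed.

Lemma borel_cantelli_telescoping (F B : nat -> set T) (N0 : nat) (C : R) :
  (0 <= C)%R ->
  (forall N, (N0 <= N)%N -> measurable (B N)) ->
  (forall N, (N0 <= N)%N -> P (B N) <= (C * (N%:R^-1 - N.+1%:R^-1))%:E) ->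
  (forall N, (N0 <= N)%N -> F N `<=` B N) ->
  P.-negligible (infinitely_often F).
Proof.
move=> C0 mB le_B FB.
pose G N := if (N0 <= N)%N then B N else set0.
have mG N : measurable (G N) by rewrite /G; case: ifPn => // /mB.
have FG N : (N0 <= N)%N -> F N `<=` G N by move=> le_N; rewrite /G le_N; apply: FB.
apply: (negligibleS (infinitely_often_sub FG)); apply: borel_cantelli mG _.
pose h n : R := ((maxn n N0)%:R^-1)%R.
apply: (@telescoping_series_lty _ h C) => // [n|n]; rewrite /G /h; first by rewrite invr_ge0.
case: (leqP N0 n) => [le_n|lt_n].
  by rewrite (maxn_idPl (leq_trans le_n (leqnSn n))); apply: le_B.
by rewrite measure0 (maxn_idPr lt_n) subrr mulr0.
Qed.

End BorelCantelli.

Section CoordinateEvents.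
Context {d : measure_display} {T : measurableType d} {R : realType}.
Variables (P : probability T R) (D : nat).

Lemma vec_event_coord (Y : 'I_D -> T -> R) i B :
  vec_event Y (fun i' => if i' == i then B else setT) = Y i @^-1` B.
Proof.
rewrite /vec_event (bigD1 i) //= eqxx big1 ?setIT // => i' /negbTE ->.
by rewrite preimage_setT.
Qed.

Lemma vec_event_ord1 (Y : T -> R) (A : 'I_1 -> set R) :
  vec_event (fun=> Y) A = Y @^-1` A ord0.
Proof. by rewrite /vec_event big_ord1. Qed.

Lemma indep_reals_shift (Y : nat -> 'I_D -> {RV P >-> R}) N s n i :
  (s + n <= N)%N -> indep_vectors P (iota 1 N) Y ->
  indep_reals P (iota 1 n) (fun j => Y (s + j)%N i).
Proof.
move=> le_sn indepY J uniqJ subJ A mA.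
pose A' m i' := if i' == i then A (m - s)%N ord0 else setT.
have mA' m i' : measurable (A' m i') by rewrite /A'; case: ifP.
have uniqJ' : uniq (map (addn s) J) by rewrite map_inj_uniq //; apply: addnI.
have subJ' : {subset map (addn s) J <= iota 1 N}.
  by move=> m /mapP[j /subJ]; rewrite !mem_iota => ? ->; lia.
have := indepY _ uniqJ' subJ' A' mA'; rewrite !big_map.
have coord j : vec_event (Y (s + j)%N) (A' (s + j)%N) =
               vec_event (fun=> Y (s + j)%N i) (A j).
  by rewrite vec_event_coord vec_event_ord1 addKn.
by under eq_bigr do rewrite coord; under [in X in _ = X -> _]eq_bigr do rewrite coord.
Qed.

End CoordinateEvents.

Lemma sqrS_mul_div_pow4_le (R : realType) (n : nat) : (0 < n)%N ->
  n.+1%:R ^+ 2 * (2 / n%:R ^+ 4) <= 16 * (n%:R^-1 - n.+1%:R^-1) :> R.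
Proof.
move=> n_gt0; have x1 : 1 <= n%:R :> R by rewrite ler1n.
rewrite -natr1 -subr_le0; move: n%:R x1 => x x1.
have -> : (x + 1) ^+ 2 * (2 / x ^+ 4) - 16 * (x^-1 - (x + 1)^-1) =
          (2 * (x + 1) ^+ 3 - 16 * x ^+ 3) / (x ^+ 4 * (x + 1)).
  by field; rewrite gt_eqF //; lra.
apply: mulr_le0_ge0.
  have : 0 <= (x - 1) * (7 * x ^+ 2 + 3 * x + 1) by apply: mulr_ge0; nra.
  nra.
by rewrite invr_ge0; apply: mulr_ge0; [apply: exprn_ge0|]; lra.
Qed.

Definition sample {d : measure_display} {T : measurableType d} {R : realType}
    {P : probability T R} {D : nat} (X : nat -> nat -> 'I_D -> {RV P >-> R})
    (N : nat) (w : T) : nat -> 'I_D -> R :=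
  fun n i => X N n i w.

Section ChangePointModel.
Context {d : measure_display} {T : measurableType d} {R : realType}.
Context {P : probability T R} {D M0 N0 : nat}.
Context {X : nat -> nat -> 'I_D -> {RV P >-> R}} {L : nat -> nat -> nat}.
Context {mu : nat -> 'I_D -> R} {c0 : R}.

Hypothesis HL : forall N, (N0 <= N)%N ->
  [/\ L N 0%N = 0%N, L N M0.+1 = N &
      forall k, (k <= M0)%N -> (L N k < L N k.+1)%N].
Hypothesis Hindep : forall N, (N0 <= N)%N -> indep_vectors P (iota 1 N) (X N).
Hypothesis Hident : forall k, (1 <= k <= M0.+1)%N ->
  forall N N' n n', (N0 <= N)%N -> (N0 <= N')%N ->
  (L N k.-1 < n <= L N k)%N -> (L N' k.-1 < n' <= L N' k)%N ->
  forall A : 'I_D -> set R, (forall i, measurable (A i)) ->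
    P (vec_event (X N n) A) = P (vec_event (X N' n') A).
Hypothesis Hc0 : 0 < c0.
Hypothesis HA4 : forall k, (1 <= k <= M0.+1)%N -> forall (i : 'I_D) (n : nat),
  (1 <= n)%N -> forall a : R, 0 < a ->
  forall (d' : measure_display) (Om : measurableType d')
         (Q : probability Om R) (Z : nat -> {RV Q >-> R}),
  indep_reals Q (iota 1 n) (fun j => Z j) ->
  (forall j, (1 <= j <= n)%N -> forall N m, (N0 <= N)%N ->
     (L N k.-1 < m <= L N k)%N ->
     forall B : set R, measurable B ->
       Q (Z j @^-1` B) = P (X N m i @^-1` B)) ->
  (Q [set w | (a <= `| (\sum_(1 <= j < n.+1) Z j w) / n%:R - mu k i |)%R]
     <= (2 * expR (- (c0 * a ^+ 2 * n%:R)))%:E)%E.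

Lemma change_point_le {N k} : (N0 <= N)%N -> (k <= M0.+1)%N -> (L N k <= N)%N.
Proof.
move=> le_N le_k; have [_ LN step] := HL N le_N.
have mono m : (k + m <= M0.+1)%N -> (L N k <= L N (k + m))%N.
  elim: m => [|m IH] le_km; first by rewrite addn0.
  by rewrite addnS in le_km *; apply: leq_trans (IH (ltnW le_km)) (ltnW (step _ le_km)).
by rewrite -[X in (_ <= X)%N]LN -(subnKC le_k); apply: mono; rewrite subnKC.
Qed.

(* Chosen so that (A.4) bounds each deviation probability by 2 N^-4. *)
Definition deviation_radius N n : R := Num.sqrt (4 * ln N%:R / (c0 * n%:R)).

Definition deviation_event N k s e i : set T :=
  if [&& (0 < k)%N, (k <= M0.+1)%N, (L N k.-1 <= s)%N, (s < e)%N & (e <= L N k)%N]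
  then [set w | deviation_radius N (e - s) <= `|block_mean (sample X N w) s e i - mu k i|]
  else set0.

Definition bad_event N : set T :=
  \big[setU/set0]_(t : 'I_M0.+2 * 'I_N.+1 * 'I_N.+1 * 'I_D)
    let: (k, s, e, i) := t in deviation_event N k s e i.

Lemma measurable_deviation_event N k s e i : measurable (deviation_event N k s e i).
Proof.
rewrite /deviation_event; case: ifP => // _.
have mdev : measurable_fun setT
    (fun w => `|block_mean (sample X N w) s e i - mu k i|).
  apply: measurableT_comp; first exact: measurable_realfun.normr_measurable.
  apply: measurable_realfun.measurable_funB; last exact: measurable_cst.
  under eq_fun do rewrite block_meanE.
  apply: measurable_realfun.measurable_funM; last exact: measurable_cst.
  by apply: measurable_sum => j; exact: measurable_funPT.
have := measurable_realfun.measurable_fun_ler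
  (measurable_cst (deviation_radius N (e - s))) mdev measurableT (Y := [set true]).
by rewrite setTI; apply.
Qed.

Lemma measurable_bad_event N : measurable (bad_event N).
Proof.
by apply: bigsetU_measurable => -[[[k s] e] i] _; apply: measurable_deviation_event.
Qed.

Lemma deviation_event_prob_le N k s e i : (2 <= N)%N -> (N0 <= N)%N ->
  (P (deviation_event N k s e i) <= (2 / N%:R ^+ 4)%:E)%E.
Proof.
move=> N2 le_N; have N_gt0 : 0 < N%:R :> R by rewrite ltr0n; lia.
rewrite /deviation_event; case: ifP => [/and5P[k0 kM sk se ek]|_]; last first.
  by rewrite measure0 lee_fin divr_ge0 // exprn_ge0 // ltW.
have le_eN := leq_trans ek (change_point_le le_N kM).
set n := (e - s)%N; have n_gt0 : (0 < n)%N by rewrite subn_gt0.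
have lnN_gt0 : 0 < ln N%:R :> R by apply: ln_gt0; rewrite ltr1n.
have arg_gt0 : 0 < 4 * ln N%:R / (c0 * n%:R).
  by apply: divr_gt0; [lra | apply: mulr_gt0; rewrite ?ltr0n].
have r_gt0 : 0 < deviation_radius N n by rewrite sqrtr_gt0.
have kk : (0 < k <= M0.+1)%N by rewrite k0 kM.
have := HA4 k kk i n n_gt0 _ r_gt0 d T P (fun j => X N (s + j)%N i).
have -> : c0 * deviation_radius N n ^+ 2 * n%:R = 4%:R * ln N%:R.
  rewrite sqr_sqrtr ?ltW //; field.
  by rewrite !gt_eqF ?ltr0n.
rewrite expRN expRM_natl lnK ?posrE // -/(_ / _).
have -> : [set w | deviation_radius N n <=
                    `|block_mean (sample X N w) s e i - mu k i|] =
          [set w | deviation_radius N n <=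
                    `|(\sum_(1 <= j < n.+1) X N (s + j)%N i w) / n%:R - mu k i|].
  by apply/seteqP; split => w /=; rewrite block_meanE.
apply.
  by apply: indep_reals_shift (Hindep N le_N); rewrite subnKC // ltnW.
move=> j /andP[j1 jn] N' m le_N' m_in B mB.
have mA i' : measurable (if i' == i then B else setT) by case: ifP.
have sj_in : (L N k.-1 < s + j <= L N k)%N by move: jn; rewrite /n; lia.
by have := Hident k kk N N' _ m le_N le_N' sj_in m_in _ mA; rewrite !vec_event_coord.
Qed.

Lemma bad_event_prob_le N : (2 <= N)%N -> (N0 <= N)%N ->
  (P (bad_event N) <= (16 * (M0.+2 * D)%:R * (N%:R^-1 - N.+1%:R^-1))%:E)%E.
Proof.
move=> N2 le_N; rewrite /bad_event.
apply: (le_trans (le_measure_bigsetU_card P _ _ (2 / N%:R ^+ 4) _ _)).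
- by case=> [[[k s] e] i]; apply: measurable_deviation_event.
- by case=> [[[k s] e] i]; apply: deviation_event_prob_le.
rewrite lee_fin !card_prod !card_ord !natrM.
have := sqrS_mul_div_pow4_le R N (ltnW N2).
move: (M0.+2)%:R (N.+1)%:R D%:R (ler0n R M0.+2) (ler0n R D) => a b c a0 c0'.
move: (_ / _) (_ - _) => t u le_tu.
have -> : a * b * b * c * t = a * c * (b ^+ 2 * t) by ring.
have -> : 16 * (a * c) * u = a * c * (16 * u) by ring.
by rewrite ler_wpM2l // mulr_ge0.
Qed.

Lemma negligible_infinitely_often_bad (F : nat -> set T) :
  (forall N w, (2 <= N)%N -> (N0 <= N)%N -> F N w -> bad_event N w) ->
  P.-negligible (infinitely_often F).
Proof.
move=> FB.
apply: (borel_cantelli_telescoping P F bad_event (maxn N0 2) (16 * (M0.+2 * D)%:R)).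
- by rewrite mulr_ge0.
- by move=> N _; apply: measurable_bad_event.
- by move=> N; rewrite geq_max => /andP[le_N N2]; apply: bad_event_prob_le.
- by move=> N; rewrite geq_max => /andP[le_N N2] w; apply: FB.
Qed.

Definition noise_level N : R := D%:R * ln N%:R / c0.

Lemma noise_level_ge0 {N} : (0 < N)%N -> 0 <= noise_level N.
Proof.
move=> N_gt0; apply: divr_ge0 (ltW Hc0); apply: mulr_ge0 => //.
by apply: ln_ge0; rewrite ler1n.
Qed.

Lemma sqdist_block_mean_le {N w k s e} :
  (2 <= N)%N -> (N0 <= N)%N -> ~ bad_event N w -> (0 < k <= M0.+1)%N ->
  (L N k.-1 <= s)%N -> (s < e)%N -> (e <= L N k)%N ->
  sqdist (block_mean (sample X N w) s e) (mu k) <= 4 * noise_level N / (e - s)%:R.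
Proof.
move=> N2 le_N good /andP[k0 kM] sk se ek.
have le_eN := leq_trans ek (change_point_le le_N kM).
have n_gt0 : 0 < (e - s)%:R :> R by rewrite ltr0n subn_gt0.
have arg_ge0 : 0 <= 4 * ln N%:R / (c0 * (e - s)%:R).
  by rewrite divr_ge0 ?mulr_ge0 ?ln_ge0 ?ler1n ?ltW //; lia.
have le_r i : (block_mean (sample X N w) s e i - mu k i) ^+ 2 <=
    deviation_radius N (e - s) ^+ 2.
  have : ~ deviation_event N k s e i w.
    move=> dev; apply: good; rewrite /bad_event.
    have k_lt : (k < M0.+2)%N by [].
    have s_lt : (s < N.+1)%N by lia.
    have e_lt : (e < N.+1)%N by lia.
    by rewrite (bigD1 (Ordinal k_lt, Ordinal s_lt, Ordinal e_lt, i)) //=; left.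
  rewrite /deviation_event k0 kM sk se ek /= => /negP; rewrite -ltNge => lt_r.
  rewrite -real_normK ?num_real //; apply: lerXn2r; rewrite ?nnegrE ?sqrtr_ge0 //.
  exact: ltW.
apply: le_trans (sqdist_le_const _ _ _ le_r) _.
rewrite /deviation_radius sqr_sqrtr // /noise_level le_eqVlt; apply/orP; left.
by apply/eqP; field; rewrite !gt_eqF.
Qed.

Lemma split_gain_within_le {N w k a b c} :
  (2 <= N)%N -> (N0 <= N)%N -> ~ bad_event N w -> (0 < k <= M0.+1)%N ->
  (L N k.-1 <= a)%N -> (a < b)%N -> (b < c)%N -> (c <= L N k)%N ->
  split_gain (sample X N w) a b c <= 8 * noise_level N.
Proof.
move=> N2 le_N good kk ak ab bc ck.
have near_ab := sqdist_block_mean_le N2 le_N good kk ak ab (leq_trans (ltnW bc) ck).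
have near_bc := sqdist_block_mean_le N2 le_N good kk (leq_trans ak (ltnW ab)) bc ck.
apply: harmonic_weight_le; rewrite ?ltr0n ?subn_gt0 //.
have := sqdist_le_via (block_mean (sample X N w) a b) (block_mean (sample X N w) b c) (mu k).
lra.
Qed.

Definition separation_threshold N k : R :=
  250 * D%:R * ln N%:R / (c0 * sqdist (mu k) (mu k.+1)).

Lemma lt_of_separation_threshold {N k m n} : (0 < N)%N ->
  separation_threshold N k < (n - m)%:R -> (m < n)%N.
Proof.
move=> N_gt0 lt_q; rewrite -subn_gt0 -(ltr0n R); apply: le_lt_trans lt_q.
apply: divr_ge0; last exact: mulr_ge0 (ltW Hc0) (sqdist_ge0 _ _).
by rewrite !mulr_ge0 // ln_ge0 // ler1n.
Qed.

Lemma split_gain_across_gt {N w k a c} :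
  (2 <= N)%N -> (N0 <= N)%N -> ~ bad_event N w -> (0 < k <= M0)%N ->
  mu k <> mu k.+1 -> (L N k.-1 <= a)%N -> (c <= L N k.+1)%N ->
  separation_threshold N k < (L N k - a)%:R ->
  separation_threshold N k < (c - L N k)%:R ->
  8 * noise_level N < split_gain (sample X N w) a (L N k) c.
Proof.
move=> N2 le_N good kk neq_mu ak ck lt_a lt_c.
have N_gt0 : (0 < N)%N by apply: ltnW.
have al := lt_of_separation_threshold N_gt0 lt_a.
have lc := lt_of_separation_threshold N_gt0 lt_c.
have Δ_gt0 := sqdist_gt0 neq_mu.
have q_eq : separation_threshold N k = 250 * noise_level N / sqdist (mu k) (mu k.+1).
  by rewrite /separation_threshold /noise_level; field; rewrite !gt_eqF.
rewrite q_eq in lt_a lt_c.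
have kk1 : (0 < k <= M0.+1)%N by case/andP: kk => -> /leqW.
have kk' : (0 < k.+1 <= M0.+1)%N by case/andP: kk.
have near_a := sqdist_block_mean_le N2 le_N good kk1 ak al (leqnn _).
have near_c := sqdist_block_mean_le N2 le_N good kk' (leqnn _) lc ck.
apply: separated_weight_gt (noise_level_ge0 N_gt0) Δ_gt0 lt_a lt_c _.
by have := sqdist_ge_sub (block_mean (sample X N w) a (L N k))
  (block_mean (sample X N w) (L N k) c) (mu k) (mu k.+1); lra.
Qed.

Lemma detected_right_bad {N w Mhat ls} k a b c :
  (2 <= N)%N -> (N0 <= N)%N -> is_minimizer (sample X N w) N Mhat ls ->
  two_detected N ls a b c -> (0 < k <= M0)%N -> mu k <> mu k.+1 ->
  (L N k.-1 <= a)%N -> (c <= L N k.+1)%N ->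
  separation_threshold N k < (L N k - b)%:R ->
  separation_threshold N k < (c - L N k)%:R -> bad_event N w.
Proof.
move=> N2 le_N min_ls det kk neq_mu ak ck lt_b lt_c; apply: contrapT => good.
have N_gt0 : (0 < N)%N by apply: ltnW.
have /andP[ab _] := two_detected_lt min_ls.1 det.
have bl := lt_of_separation_threshold N_gt0 lt_b.
have lc := lt_of_separation_threshold N_gt0 lt_c.
have blc : (b < L N k < c)%N by rewrite bl lc.
have kk1 : (0 < k <= M0.+1)%N by case/andP: kk => -> /leqW.
have := split_gain_right min_ls det blc.
have := split_gain_within_le N2 le_N good kk1 ak ab bl (leqnn _).
have := split_gain_across_gt N2 le_N good kk neq_mu (leq_trans ak (ltnW ab)) ck lt_b lt_c.
lra.
Qed.

Lemma detected_left_bad {N w Mhat ls} k a b c :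
  (2 <= N)%N -> (N0 <= N)%N -> is_minimizer (sample X N w) N Mhat ls ->
  two_detected N ls a b c -> (0 < k <= M0)%N -> mu k <> mu k.+1 ->
  (L N k.-1 <= a)%N -> (c <= L N k.+1)%N ->
  separation_threshold N k < (L N k - a)%:R ->
  separation_threshold N k < (b - L N k)%:R -> bad_event N w.
Proof.
move=> N2 le_N min_ls det kk neq_mu ak ck lt_a lt_b; apply: contrapT => good.
have N_gt0 : (0 < N)%N by apply: ltnW.
have /andP[_ bc] := two_detected_lt min_ls.1 det.
have al := lt_of_separation_threshold N_gt0 lt_a.
have lb := lt_of_separation_threshold N_gt0 lt_b.
have alb : (a < L N k < b)%N by rewrite al lb.
have kk' : (0 < k.+1 <= M0.+1)%N by case/andP: kk.
have := split_gain_left min_ls det alb.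
have := split_gain_within_le N2 le_N good kk' (leqnn _) lb bc ck.
have := split_gain_across_gt N2 le_N good kk neq_mu ak (leq_trans (ltnW bc) ck) lt_a lt_b.
lra.
Qed.

End ChangePointModel.

Theorem lemma8
  (d : measure_display) (T : measurableType d) (R : realType)
  (P : probability T R)
  (D : nat) (M0 : nat)
  (* X N n = (X N n i)_(i < D) : the n-th observation for sample size N *)
  (X : nat -> nat -> 'I_D -> {RV P >-> R})
  (* L N k = k-th change point for sample size N *)
  (L : nat -> nat -> nat)
  (* the model is required for all sample sizes N >= N0 *)
  (N0 : nat)
  (mu : nat -> 'I_D -> R) (c0 : R)
  (Mmax : nat) (f beta : nat -> R)
  (* (M.2) *)
  (HM0 : (0 < M0)%N)
  (HL : forall N, (N0 <= N)%N ->
     [/\ L N 0%N = 0%N, L N M0.+1 = N &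
         forall k, (k <= M0)%N -> (L N k < L N k.+1)%N])
  (Hsizes : forall k, (1 <= k <= M0.+1)%N ->
     forall m : nat, exists N1 : nat, forall N, (N1 <= N)%N ->
       (m <= L N k - L N k.-1)%N)
  (Hindep : forall N, (N0 <= N)%N -> indep_vectors P (iota 1 N) (X N))
  (Hident : forall k, (1 <= k <= M0.+1)%N ->
     forall N N' n n', (N0 <= N)%N -> (N0 <= N')%N ->
     (L N k.-1 < n <= L N k)%N -> (L N' k.-1 < n' <= L N' k)%N ->
     forall A : 'I_D -> set R, (forall i, measurable (A i)) ->
       P (vec_event (X N n) A) = P (vec_event (X N' n') A))
  (Hmoments : forall k, (1 <= k <= M0.+1)%N ->
     forall N n, (N0 <= N)%N -> (L N k.-1 < n <= L N k)%N ->
     forall i : 'I_D,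
       [/\ P.-integrable setT (EFin \o X N n i),
           P.-integrable setT (EFin \o (fun w => X N n i w ^+ 2)) &
           ('E_P[X N n i] = (mu k i)%:E)%E])
  (Hmu : forall k, (1 <= k <= M0)%N -> mu k <> mu k.+1)
  (* (A.4) *)
  (Hc0 : 0 < c0)
  (HA4 : forall k, (1 <= k <= M0.+1)%N -> forall (i : 'I_D) (n : nat),
     (1 <= n)%N -> forall a : R, 0 < a ->
     forall (d' : measure_display) (Om : measurableType d')
            (Q : probability Om R) (Z : nat -> {RV Q >-> R}),
     indep_reals Q (iota 1 n) (fun j => Z j) ->
     (forall j, (1 <= j <= n)%N -> forall N m, (N0 <= N)%N ->
        (L N k.-1 < m <= L N k)%N ->
        forall B : set R, measurable B ->
          Q (Z j @^-1` B) = P (X N m i @^-1` B)) ->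
     (Q [set w | (a <= `| (\sum_(1 <= j < n.+1) Z j w) / n%:R - mu k i |)%R]
        <= (2 * expR (- (c0 * a ^+ 2 * n%:R)))%:E)%E)
  (* inputs of Algorithm 2 *)
  (HMmax : (1 <= Mmax)%N)
  (Hf : forall N, 0 < f N) :
  let data N := fun w n i => X N n i w in
  let Nk N k := (L N k - L N k.-1)%N in
  (* (i) *)
  (forall k, (1 <= k <= M0)%N ->
     let q N := 250 * D%:R * ln N%:R / (c0 * sqdist (mu k) (mu k.+1)) in
     let F N := [set w | exists Mhat ls,
         alg2_output (data N w) N Mmax (f N) (beta N) Mhat ls /\
         exists n1 n2 n3 : nat,
           [/\ (1 <= n1 < n2)%N /\ (n2 < Nk N k)%N,
               (1 <= n3 <= Nk N k.+1)%N,
               two_detected N ls (L N k.-1 + n1) (L N k.-1 + n2) (L N k + n3),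
               q N < (Nk N k - n2)%:R & q N < n3%:R]] in
     P.-negligible (infinitely_often F))
  /\
  (* (ii) *)
  (forall k, (2 <= k <= M0.+1)%N ->
     let q N := 250 * D%:R * ln N%:R / (c0 * sqdist (mu k.-1) (mu k)) in
     let F N := [set w | exists Mhat ls,
         alg2_output (data N w) N Mmax (f N) (beta N) Mhat ls /\
         exists n1 n2 n3 : nat,
           [/\ (1 <= n1 < n2)%N /\ (n2 < Nk N k)%N,
               (1 <= n3 <= Nk N k.-1)%N,
               two_detected N ls (L N k.-1 - n3) (L N k.-1 + n1) (L N k.-1 + n2),
               q N < n1%:R & q N < n3%:R]] in
     P.-negligible (infinitely_often F)).
Proof.
move=> data Nk; split=> [k kk q F | [|k] // kk q F].
- apply: (negligible_infinitely_often_bad HL Hindep Hident Hc0 HA4) => N w N2 le_N.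
  case=> Mhat [ls [/alg2_output_minimizer min_ls [n1 [n2 [n3 []]]]]].
  move=> [/andP[n1_gt0 n12] n2_lt] /andP[n3_gt0 n3_le] det lt_b lt_c.
  apply: (detected_right_bad HL Hc0 k _ _ _ N2 le_N min_ls det kk (Hmu k kk)).
  + exact: leq_addr.
  + by move: n3_le; rewrite /Nk /=; lia.
  + by rewrite subnDA.
  + by rewrite addKn.
- apply: (negligible_infinitely_often_bad HL Hindep Hident Hc0 HA4) => N w N2 le_N.
  case=> Mhat [ls [/alg2_output_minimizer min_ls [n1 [n2 [n3 []]]]]].
  move=> [/andP[n1_gt0 n12] n2_lt] /andP[n3_gt0 n3_le] det lt_b lt_a.
  apply: (detected_left_bad HL Hc0 k _ _ _ N2 le_N min_ls det kk (Hmu k kk)).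
  + by move: n3_le; rewrite /Nk /=; lia.
  + by move: n2_lt; rewrite /Nk /=; lia.
  + by rewrite subKn //; move: n3_le; rewrite /Nk /=; lia.
  + by rewrite addKn.
Qed.
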